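(* Let $\mathcal{B}$ be a real Banach space having a pre-dual space $\mathcal{B}_*$, let $\nu_j\in\mathcal{B}_*$, $j\in\mathbb{N}_m$, be linearly independent, and let $\mathbf{y}\in\mathbb{R}^m\setminus\{0\}$. For $\mathbf{c}\in\mathbb{R}^m$ put $\mathcal{L}^*(\mathbf{c}):=\sum_{j\in\mathbb{N}_m}c_j\nu_j$. Then $\hat{\mathbf{c}}\in\mathbb{R}^m\setminus\{0\}$ is a solution of $$\inf\{\|\mathcal{L}^*(\mathbf{c})\|_{\mathcal{B}_*}:\ \langle\mathbf{c},\mathbf{y}\rangle_{\mathbb{R}^m}=1,\ \mathbf{c}\in\mathbb{R}^m\}\qquad(\mathrm{D})$$ if and only if $$\frac{1}{\|\mathcal{L}^*(\hat{\mathbf{c}})\|_{\mathcal{B}_*}}\,\partial\|\cdot\|_{\mathcal{B}_*}(\mathcal{L}^*(\hat{\mathbf{c}}))\cap\mathcal{M}_{\mathbf{y}}\neq\emptyset.$$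
   Context: $\mathcal{B}$ is a real Banach space with dual $\mathcal{B}^*$ and pairing $\langle\nu,f\rangle_{\mathcal{B}}:=\nu(f)$; $\mathbb{N}_m:=\{1,\dots,m\}$; $\mathcal{L}(f):=[\langle\nu_j,f\rangle_{\mathcal{B}}:j\in\mathbb{N}_m]$, $\mathcal{M}_{\mathbf{y}}:=\{f\in\mathcal{B}:\mathcal{L}(f)=\mathbf{y}\}$. A normed space $\mathcal{B}_*$ is a pre-dual of $\mathcal{B}$ if $(\mathcal{B}_* )^*=\mathcal{B}$, with $\langle\nu,f\rangle_{\mathcal{B}}=f(\nu)$ for $\nu\in\mathcal{B}_*$. For a convex $\phi$ on a real normed space $X$, $\partial\phi(x):=\{\mu\in X^*:\phi(z)-\phi(x)\ge\mu(z-x)\ \forall z\in X\}$; so $\partial\|\cdot\|_{\mathcal{B}_*}(\nu)\subseteq\mathcal{B}$. *)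

From HB Require Import structures.
From mathcomp Require Import all_boot all_order all_algebra.
From mathcomp Require Import all_classical all_reals topology normedtype.
Set Implicit Arguments. Unset Strict Implicit. Unset Printing Implicit Defensive.
Import Order.TTheory GRing.Theory Num.Theory.
Import numFieldNormedType.Exports.
Local Open Scope classical_set_scope.
Local Open Scope ring_scope.

(* The pre-dual B_* is a real normed space V; B = (B_* )^* is the space of
   continuous linear functionals on V, with <nu, f>_B = f nu. *)
Definition dual_elem (R : realType) (V : normedModType R) (f : V -> R) : Prop :=
  (forall (a : R) (x y : V), f (a *: x + y) = a * f x + f y) /\ continuous f.

Definition lin_indep (R : realType) (V : normedModType R) (m : nat)
  (nu : 'I_m -> V) : Prop :=
  forall c : 'I_m -> R, \sum_(j < m) c j *: nu j = 0 -> forall j, c j = 0.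

Definition Lstar (R : realType) (V : normedModType R) (m : nat)
  (nu : 'I_m -> V) (c : 'I_m -> R) : V := \sum_(j < m) c j *: nu j.

Definition dotRm (R : realType) (m : nat) (c y : 'I_m -> R) : R :=
  \sum_(j < m) c j * y j.

Definition solves_D (R : realType) (V : normedModType R) (m : nat)
  (nu : 'I_m -> V) (y : 'I_m -> R) (chat : 'I_m -> R) : Prop :=
  dotRm chat y = 1 /\
  forall c : 'I_m -> R, dotRm c y = 1 -> `|Lstar nu chat| <= `|Lstar nu c|.

Definition subdiff_norm (R : realType) (V : normedModType R) (nu0 : V)
  : set (V -> R) :=
  [set f | dual_elem f /\ forall z : V, f (z - nu0) <= `|z| - `|nu0|].

Definition M_y (R : realType) (V : normedModType R) (m : nat)
  (nu : 'I_m -> V) (y : 'I_m -> R) : set (V -> R) :=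
  [set f | dual_elem f /\ forall j, f (nu j) = y j].

Definition scale_set (R : realType) (V : normedModType R) (t : R)
  (S : set (V -> R)) : set (V -> R) :=
  [set f | exists2 g, S g & f = (fun v => t * g v)].

From HB Require Import structures.
From mathcomp Require Import all_boot all_order all_algebra.
From mathcomp Require Import all_classical all_reals topology normedtype.
From mathcomp Require Import ring lra.
Import Order.TTheory GRing.Theory Num.Theory.
Import numFieldNormedType.Exports.
Local Open Scope classical_set_scope.
Local Open Scope ring_scope.
Set Implicit Arguments. Unset Strict Implicit.

(* Write nh := L^*(chat) and k := 1/|nh|.  Since the nu_j are independent and
   chat <> 0, nh <> 0.  By homogeneity, chat solves (D) iff <chat, y> = 1 and
   <c, y> <= k |L^*(c)| for every c (lemma solves_DP).  A functional g of the
   dual lies in the subdifferential of the norm at nh iff g nh = |nh| and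
   g <= |.| (lemma subdiff_normP).
   - If chat solves (D), the map L^*(c) |-> <c, y> is a well-defined linear
     functional on span{nu_j} dominated by k |.|; the Hahn-Banach theorem,
     proved here in its algebraic form via Zorn's lemma on graphs of
     dominated partial linear functionals, extends it to a bounded, hence
     continuous, functional f on B_* with f(nu_j) = y_j and |nh| f in the
     subdifferential at nh.
   - Conversely, if f = k g lies in M_y with g in the subdifferential, then
     <c, y> = f(L^*(c)) = k g(L^*(c)) <= k |L^*(c)|, with equality for chat. *)

Definition lin_functional (R : pzRingType) (V : lmodType R) (f : V -> R) :=
  forall (a : R) (x y : V), f (a *: x + y) = a * f x + f y.

Section LinearFunctional.
Context (R : pzRingType) (V : lmodType R) (f : V -> R).
Hypothesis f_lin : lin_functional f.

Lemma lin0 : f 0 = 0.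
Proof.
have := f_lin 1 0 0; rewrite scaler0 addr0 mul1r => h.
by apply: (addrI (f 0)); rewrite addr0 -h.
Qed.

Lemma linD x y : f (x + y) = f x + f y.
Proof. by rewrite -[x in LHS]scale1r f_lin mul1r. Qed.

Lemma linZ a x : f (a *: x) = a * f x.
Proof. by rewrite -[_ *: x]addr0 f_lin lin0 addr0. Qed.

Lemma linN x : f (- x) = - f x.
Proof. by rewrite -scaleN1r linZ mulN1r. Qed.

Lemma linB x y : f (x - y) = f x - f y.
Proof. by rewrite linD linN. Qed.

Lemma lin_sum m (c : 'I_m -> R) (nu : 'I_m -> V) :
  f (\sum_(j < m) c j *: nu j) = \sum_(j < m) c j * f (nu j).
Proof.
elim/big_ind2: _ => //; first by rewrite lin0.
  by move=> a b u v <- <-; rewrite linD.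
by move=> i _; rewrite linZ.
Qed.

End LinearFunctional.

Lemma lin_bounded_continuous (R : realFieldType) (V : normedModType R)
    (f : V -> R) (k : R) :
  lin_functional f -> (forall v, `|f v| <= k * `|v|) -> continuous f.
Proof.
move=> f_lin f_bd x; apply/(@cvgrPdist_lt _ _ _ (nbhs x)) => e e_gt0.
have k1_gt0 : 0 < `|k| + 1 by rewrite ltr_pwDr// normr_ge0.
near=> z; rewrite -(linB f_lin).
apply: (le_lt_trans (f_bd _)).
apply: (le_lt_trans (y := (`|k| + 1) * `|x - z|)).
  apply: ler_wpM2r; first exact: normr_ge0.
  by apply: (le_trans (ler_norm k)); rewrite lerDl.
rewrite -ltr_pdivlMl//.
near: z; apply: (@cvgr_dist_lt _ _ _ _ _ id); first exact: cvg_id.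
by rewrite mulrC divr_gt0.
Unshelve. all: by end_near. Qed.

(* The algebraic Hahn-Banach theorem for a sublinear functional p.  Partial
   linear functionals are handled through their graphs G : set (V * R). *)
Section HahnBanach.
Context (R : realType) (V : lmodType R) (p : V -> R).
Hypothesis p_subadd : forall u v, p (u + v) <= p u + p v.
Hypothesis p_homo : forall t v, 0 <= t -> p (t *: v) = t * p v.

Definition lin_graph (G : set (V * R)) : Prop :=
  [/\ (forall v r s, G (v, r) -> G (v, s) -> r = s),
      (forall a u v r s, G (u, r) -> G (v, s) -> G (a *: u + v, a * r + s))
    & G (0, 0)].

Definition dom_graph (G : set (V * R)) : Prop :=
  lin_graph G /\ forall v r, G (v, r) -> r <= p v.

Lemma lin_graphZ G a u r : lin_graph G -> G (u, r) -> G (a *: u, a * r).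
Proof. by case=> _ G_lin G0 Gu; have := G_lin a u 0 r 0 Gu G0; rewrite !addr0. Qed.

Lemma lin_graphB G u v r s :
  lin_graph G -> G (u, r) -> G (v, s) -> G (u - v, r - s).
Proof.
case=> _ G_lin _ Gu Gv; have := G_lin (-1) v u s r Gv Gu.
by rewrite scaleN1r mulN1r addrC [(- s) + r]addrC.
Qed.

(* The key inequality of the one-step extension: a value c at a new point x0
   keeps the extension dominated iff it lies between these two bounds. *)
Lemma extension_gap A x0 : dom_graph A ->
  exists c, (forall u r, A (u, r) -> r - p (u - x0) <= c) /\
            (forall w s, A (w, s) -> c <= p (w + x0) - s).
Proof.
move=> [[_ A_lin A0] A_dom].
pose S := [set z | exists u r, A (u, r) /\ z = r - p (u - x0)].
have S_le u r w s : A (u, r) -> A (w, s) -> r - p (u - x0) <= p (w + x0) - s.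
  move=> Au Aw; have := A_dom _ _ (A_lin 1 u w r s Au Aw).
  rewrite scale1r mul1r => rs_le.
  have := p_subadd (u - x0) (w + x0).
  rewrite addrCA subrK addrC; lra.
have S_ne : S !=set0 by exists (0 - p (0 - x0)), 0, 0.
have S_ub : ubound S (p (0 + x0) - 0) by move=> z [u [r [Au ->]]]; exact: S_le.
exists (sup S); split.
  move=> u r Au; apply: sup_upper_bound; last by exists u, r.
  by split; last exists (p (0 + x0) - 0).
move=> w s Aw; apply: ge_sup => // z [u [r [Au ->]]]; exact: S_le.
Qed.

Definition graph_extend (A : set (V * R)) (x0 : V) (c : R) : set (V * R) :=
  [set q | exists u r t, A (u, r) /\ q = (u + t *: x0, r + t * c)].

Lemma graph_extend_sub A x0 c : A `<=` graph_extend A x0 c.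
Proof. by move=> [u r] Au; exists u, r, 0; rewrite scale0r mul0r !addr0. Qed.

Lemma graph_extend_new A x0 c : A (0, 0) -> graph_extend A x0 c (x0, c).
Proof. by move=> A0; exists 0, 0, 1; rewrite scale1r mul1r !add0r. Qed.

Lemma lin_graph_extend A x0 c : lin_graph A -> (forall r, ~ A (x0, r)) ->
  lin_graph (graph_extend A x0 c).
Proof.
move=> A_graph x0_out; have [A_fun A_lin A0] := A_graph; split.
- move=> v r s [u1 [r1 [t1 [A1 [-> ->]]]]] [u2 [r2 [t2 [A2 [E ->]]]]].
  have [t_eq|t_neq] := eqVneq t1 t2.
    rewrite -t_eq in E *.
    have u_eq : u1 = u2 by rewrite -(addrK (t1 *: x0) u1) E addrK.
    by rewrite u_eq in A1; rewrite (A_fun _ _ _ A1 A2).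
  exfalso; apply: (x0_out ((t1 - t2)^-1 * (r2 - r1))).
  have -> : x0 = (t1 - t2)^-1 *: (u2 - u1).
    have -> : u2 - u1 = (t1 - t2) *: x0.
      have -> : u2 = u1 + t1 *: x0 - t2 *: x0 by rewrite E addrK.
      by rewrite addrAC [u1 + _ - u1]addrAC subrr add0r scalerBl.
    by rewrite scalerA mulVf ?subr_eq0 // scale1r.
  by apply: lin_graphZ => //; exact: lin_graphB.
- move=> a v w r s [u1 [r1 [t1 [A1 [-> ->]]]]] [u2 [r2 [t2 [A2 [-> ->]]]]].
  exists (a *: u1 + u2), (a * r1 + r2), (a * t1 + t2); split; first exact: A_lin.
  congr (_, _); last by ring.
  by rewrite scalerDr scalerA scalerDl addrACA.
- exact: graph_extend_sub.
Qed.

Lemma dominated_extend A x0 c : dom_graph A ->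
  (forall u r, A (u, r) -> r - p (u - x0) <= c) ->
  (forall w s, A (w, s) -> c <= p (w + x0) - s) ->
  forall v r, graph_extend A x0 c (v, r) -> r <= p v.
Proof.
move=> [A_graph A_dom] c_ge c_le v r [u [r' [t [Au [-> ->]]]]].
case: (ltrgt0P t) => [t_gt0|t_lt0|->].
- have := c_le _ _ (lin_graphZ (t^-1) A_graph Au).
  have := p_homo (t^-1 *: u + x0) (ltW t_gt0).
  rewrite scalerDr scalerA mulfV ?gt_eqF// scale1r => -> c_le'.
  have := ler_wpM2l (ltW t_gt0) c_le'.
  rewrite mulrBr mulrA mulfV ?gt_eqF // mul1r; lra.
- have mt_gt0 : 0 < - t by rewrite oppr_gt0.
  have := c_ge _ _ (lin_graphZ ((- t)^-1) A_graph Au).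
  have := p_homo ((- t)^-1 *: u - x0) (ltW mt_gt0).
  rewrite scalerDr scalerA mulfV ?gt_eqF// scale1r scalerN scaleNr opprK.
  move=> -> c_ge'; have := ler_wpM2l (ltW mt_gt0) c_ge'.
  rewrite mulrBr mulrA mulfV ?gt_eqF // mul1r; lra.
- by rewrite scale0r mul0r !addr0; apply: A_dom.
Qed.

Lemma dom_graph_bigcup (F : set (set (V * R))) :
  F `<=` dom_graph -> total_on F subset -> F !=set0 ->
  dom_graph (\bigcup_(X in F) X).
Proof.
move=> F_dom F_tot [X0 FX0].
have common a b : (\bigcup_(X in F) X) a -> (\bigcup_(X in F) X) b ->
    exists2 Y, F Y & Y a /\ Y b.
  move=> [X FX Xa] [Y FY Yb].
  case: (F_tot X Y FX FY) => [XY|YX].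
  - by exists Y => //; split => //; exact: XY.
  - by exists X => //; split => //; exact: YX.
split; first split.
- move=> v r s Ur Us; have [Y /F_dom [[Y_fun _ _] _] [Yr Ys]] := common _ _ Ur Us.
  exact: Y_fun Yr Ys.
- move=> a u v r s Ur Us.
  have [Y FY [Yr Ys]] := common _ _ Ur Us; have [[_ Y_lin _] _] := F_dom _ FY.
  by exists Y; [|exact: Y_lin].
- by exists X0 => //; have [[]] := F_dom _ FX0.
move=> v r Ur; have [Y /F_dom [_ Y_dom] [Yr _]] := common _ _ Ur Ur.
exact: Y_dom.
Qed.

Theorem hahn_banach (B : set (V * R)) : dom_graph B ->
  exists g : V -> R, [/\ lin_functional g, (forall v, g v <= p v) &
                         (forall v r, B (v, r) -> g v = r)].
Proof.
move=> B_dom; have B0 : B (0, 0) by case: B_dom => -[].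
pose P := fun G : set (V * R) => G = set0 \/ (dom_graph G /\ B `<=` G).
have P_chain : forall F, F `<=` P -> total_on F subset -> P (\bigcup_(X in F) X).
  move=> F FP F_tot.
  pose F' := F `&` [set X | dom_graph X /\ B `<=` X].
  have FF' : \bigcup_(X in F) X = \bigcup_(X in F') X.
    apply/seteqP; split => q [X FX Xq]; last by exists X => //; case: FX.
    by case: (FP X FX) => [X0|XP]; [rewrite X0 in Xq | exists X].
  rewrite /P FF'; have [[X F'X]|F'0] := pselect (F' !=set0).
    right; split; last by move=> q Bq; exists X => //; apply: F'X.2.2.
    apply: dom_graph_bigcup; last by exists X.
      by move=> Y [_ []].
    by move=> Y Z [FY _] [FZ _]; exact: F_tot.
  left; apply/seteqP; split => // q [X F'X _]; apply: F'0; by exists X.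
have [A [PA A_max]] := Zorn_bigcup P_chain.
have [A_dom BA] : dom_graph A /\ B `<=` A.
  case: PA => // A0; exfalso; apply: (A_max B); last by right; split.
  by rewrite A0; split => // /(_ _ B0).
have A_total x0 : exists r, A (x0, r).
  apply: contrapT => x0_out.
  have A0 : A (0, 0) by case: A_dom => -[].
  have [c [c_ge c_le]] := extension_gap x0 A_dom.
  apply: (A_max (graph_extend A x0 c)).
    split; first exact: graph_extend_sub.
    move=> /(_ (x0, c) (graph_extend_new _ _ A0)) Ax0.
    by apply: x0_out; exists c.
  right; split; last exact: subset_trans (graph_extend_sub _ _).
  split; last exact: dominated_extend.
  by apply: lin_graph_extend; [case: A_dom|move=> r Ar; apply: x0_out; exists r].
have [[A_fun A_lin _] A_le] := A_dom.
pose g x := sval (cid (A_total x)).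
have Ag x : A (x, g x) by rewrite /g; case: cid.
exists g; split.
- by move=> a x z; apply: A_fun (Ag _) (A_lin _ _ _ _ _ (Ag x) (Ag z)).
- by move=> v; apply: A_le.
- by move=> v r Bv; apply: A_fun (Ag _) (BA _ Bv).
Qed.

End HahnBanach.

Section DualMap.
Context (R : realType) (V : normedModType R) (m : nat) (nu : 'I_m -> V).

Lemma Lstar_lin a c d :
  a *: Lstar nu c + Lstar nu d = Lstar nu (fun j => a * c j + d j).
Proof.
rewrite /Lstar scaler_sumr -big_split; apply: eq_bigr => j _ /=.
by rewrite scalerDl scalerA.
Qed.

Lemma dot_lin a (c d y : 'I_m -> R) :
  a * dotRm c y + dotRm d y = dotRm (fun j => a * c j + d j) y.
Proof.
rewrite /dotRm mulr_sumr -big_split; apply: eq_bigr => j _ /=.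
by rewrite mulrDl mulrA.
Qed.

Lemma Lstar_scale a c : Lstar nu (fun j => a * c j) = a *: Lstar nu c.
Proof. by rewrite /Lstar scaler_sumr; apply: eq_bigr => j _; rewrite scalerA. Qed.

Lemma dot_scale a (c y : 'I_m -> R) :
  dotRm (fun j => a * c j) y = a * dotRm c y.
Proof. by rewrite /dotRm mulr_sumr; apply: eq_bigr => j _; rewrite mulrA. Qed.

Lemma Lstar0 : Lstar nu (fun _ => 0) = 0.
Proof. by rewrite /Lstar big1 // => j _; rewrite scale0r. Qed.

Lemma dot0 (y : 'I_m -> R) : dotRm (fun _ => 0) y = 0.
Proof. by rewrite /dotRm big1 // => j _; rewrite mul0r. Qed.

Lemma Lstar_delta j : Lstar nu (fun i => (i == j)%:R) = nu j.
Proof.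
rewrite /Lstar (bigD1 j) //= eqxx scale1r big1 ?addr0 // => i /negbTE ->.
by rewrite scale0r.
Qed.

Lemma dot_delta (y : 'I_m -> R) j : dotRm (fun i => (i == j)%:R) y = y j.
Proof.
rewrite /dotRm (bigD1 j) //= eqxx mul1r big1 ?addr0 // => i /negbTE ->.
by rewrite mul0r.
Qed.

Lemma Lstar_eval (f : V -> R) (y : 'I_m -> R) : lin_functional f ->
  (forall j, f (nu j) = y j) -> forall c, f (Lstar nu c) = dotRm c y.
Proof.
move=> f_lin f_nu c; rewrite /Lstar (lin_sum f_lin).
by apply: eq_bigr => j _; rewrite f_nu.
Qed.

Lemma Lstar_inj : lin_indep nu -> injective (Lstar nu).
Proof.
move=> nu_indep c d cd; apply/funext => j; apply/eqP; rewrite -subr_eq0; apply/eqP.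
apply: (nu_indep (fun j => c j - d j)).
have := Lstar_lin (-1) d c; rewrite scaleN1r cd addNr => diff0.
by rewrite [RHS]diff0 /Lstar; apply: eq_bigr => i _; rewrite mulN1r addrC.
Qed.

(* Homogeneity reduces (D) to a linear inequality: chat solves (D) iff
   <chat, y> = 1 and <c, y> <= |L^*(c)| / |L^*(chat)| for every c. *)
Lemma solves_DP (y chat : 'I_m -> R) : 0 < `|Lstar nu chat| ->
  solves_D nu y chat <->
  dotRm chat y = 1 /\
  forall c, dotRm c y <= `|Lstar nu chat|^-1 * `|Lstar nu c|.
Proof.
set nh := Lstar nu chat => nh_gt0; split => -[dot1 opt]; split => // c.
- set s := dotRm c y; have [s_le0|s_gt0] := lerP s 0.
    by apply: (le_trans s_le0); rewrite mulr_ge0 // invr_ge0 ltW.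
  have := opt (fun j => s^-1 * c j).
  rewrite dot_scale mulVf ?gt_eqF// Lstar_scale normrZ gtr0_norm ?invr_gt0//.
  move=> /(_ erefl) nh_le.
  rewrite mulrC ler_pdivlMr //.
  have := ler_wpM2l (ltW s_gt0) nh_le.
  by rewrite mulrA mulfV ?gt_eqF// mul1r.
- move=> dotc1; have := opt c; rewrite dotc1 mulrC ler_pdivlMr //.
  by rewrite mul1r.
Qed.

End DualMap.

Lemma subdiff_normP (R : realType) (V : normedModType R) (g : V -> R) (x : V) :
  lin_functional g ->
  (forall z, g (z - x) <= `|z| - `|x|) <-> g x = `|x| /\ forall w, g w <= `|w|.
Proof.
move=> g_lin; split => [g_sub|[gx g_le] z].
  have g_le w : g w <= `|w|.
    by have := g_sub (w + x); rewrite addrK; have := ler_normD w x; lra.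
  split => //; have := g_sub 0; rewrite sub0r normr0 (linN g_lin).
  by have := g_le x; lra.
by rewrite (linB g_lin) gx lerD2r.
Qed.

Section Certificates.
Context (R : realType) (V : normedModType R) (m : nat) (nu : 'I_m -> V)
  (y chat : 'I_m -> R).
Let nh := Lstar nu chat.
Hypothesis nh_gt0 : 0 < `|nh|.

Lemma solves_D_certificate : lin_indep nu -> solves_D nu y chat ->
  scale_set (`|nh|)^-1 (subdiff_norm nh) `&` M_y nu y !=set0.
Proof.
move=> nu_indep /(solves_DP _ nh_gt0) [dot1 opt].
pose k := `|nh|^-1; have k_gt0 : 0 < k by rewrite invr_gt0.
pose Bgr := [set q : V * R | exists c, q = (Lstar nu c, dotRm c y)].
have Bgr_dom : dom_graph (fun v => k * `|v|) Bgr.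
  split; first split.
  - by move=> v r s [c1 [-> ->]] [c2 [/(Lstar_inj nu_indep) -> ->]].
  - move=> a u v r s [c1 [-> ->]] [c2 [-> ->]].
    by exists (fun j => a * c1 j + c2 j); rewrite Lstar_lin dot_lin.
  - by exists (fun _ => 0); rewrite Lstar0 dot0.
  by move=> v r [c [-> ->]]; exact: opt.
have p_subadd (u v : V) : k * `|u + v| <= k * `|u| + k * `|v|.
  by rewrite -mulrDr ler_pM2l // ler_normD.
have p_homo (t : R) (v : V) : 0 <= t -> k * `|t *: v| = t * (k * `|v|).
  by move=> t_ge0; rewrite normrZ ger0_norm // mulrCA.
have [g [g_lin g_le g_ext]] := hahn_banach p_subadd p_homo Bgr_dom.
have g_Lstar c : g (Lstar nu c) = dotRm c y by apply: g_ext; exists c.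
have g_bd v : `|g v| <= k * `|v|.
  rewrite ler_norml g_le andbT lerNl -(linN g_lin).
  by rewrite -[X in _ <= _ * X]normrN g_le.
have g_nu j : g (nu j) = y j by rewrite -Lstar_delta g_Lstar dot_delta.
have g_dual : dual_elem g by split => //; exact: lin_bounded_continuous g_bd.
exists g; split => //; exists (fun v => `|nh| * g v).
  have ng_lin : lin_functional (fun v => `|nh| * g v).
    by move=> a x z; rewrite g_lin; ring.
  split; first split => //.
    apply: (lin_bounded_continuous (k := `|nh| * k)) => // v.
    by rewrite normrM gtr0_norm // -mulrA ler_pM2l.
  apply/(subdiff_normP _ ng_lin); split => [|w]; first by rewrite g_Lstar dot1 mulr1.
  have := ler_wpM2l (ltW nh_gt0) (g_le w).
  by rewrite mulrA mulfV ?gt_eqF // mul1r.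
by apply/funext => v; rewrite mulrA mulVf ?gt_eqF // mul1r.
Qed.

Lemma certificate_solves_D :
  scale_set (`|nh|)^-1 (subdiff_norm nh) `&` M_y nu y !=set0 ->
  solves_D nu y chat.
Proof.
move=> [f [[g [[g_lin _] g_sub] ->] [[f_lin _] f_nu]]].
have [g_nh g_le] := (subdiff_normP _ g_lin).1 g_sub.
have f_Lstar := Lstar_eval f_lin f_nu.
apply/(solves_DP _ nh_gt0); split => [|c].
  by rewrite -f_Lstar /= g_nh mulVf ?gt_eqF.
by rewrite -f_Lstar ler_wpM2l // invr_ge0 ltW.
Qed.

End Certificates.

Theorem mainTheorem10 (R : realType) (V : normedModType R) (m : nat)
  (nu : 'I_m -> V) (y : 'I_m -> R) (chat : 'I_m -> R) :
  lin_indep nu -> y <> (fun _ => 0) -> chat <> (fun _ => 0) ->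
  (solves_D nu y chat <->
   scale_set (`|Lstar nu chat|)^-1 (subdiff_norm (Lstar nu chat))
     `&` M_y nu y !=set0).
Proof.
move=> nu_indep _ chat_neq0.
have nh_gt0 : 0 < `|Lstar nu chat|.
  rewrite normr_gt0; apply/eqP => nh0; apply: chat_neq0.
  by apply: (Lstar_inj nu_indep); rewrite nh0 Lstar0.
split; first exact: solves_D_certificate.
exact: certificate_solves_D.
Qed.
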